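(* Let $1\le d\le D$ be integers, let $k$ be a field with $|k|\ge D+1$, let $A$ be a $k$-algebra and let $a_1,\ldots,a_m\in A$. Assume that for all $\alpha_1,\ldots,\alpha_m\in k$ the element $\alpha_1a_1+\cdots+\alpha_ma_m$ is algebraic over $k$ of degree at most $d$. Then $P_D(a_1,\ldots,a_m)\subseteq P_{\le d-1}(a_1,\ldots,a_m)$.
   Context: Algebras are associative with unit. For nonnegative integers $i_1,\ldots,i_m$, $p_{i_1,\ldots,i_m}(x_1,\ldots,x_m)$ is the sum of all distinct noncommutative monomials with exactly $i_j$ occurrences of $x_j$ for each $j$ ($p_{0,\ldots,0}=1$); $p_{i_1,\ldots,i_m}(a_1,\ldots,a_m)$ is its evaluation at $x_j=a_j$. $P_n(a_1,\ldots,a_m)=\operatorname{span}_k\{p_{i_1,\ldots,i_m}(a_1,\ldots,a_m)\mid i_1+\cdots+i_m=n\}$ and $P_{\le r}(a_1,\ldots,a_m)=\sum_{n=0}^rP_n(a_1,\ldots,a_m)$. An element $u$ is algebraic of degree at most $d$ if it is a root of a nonzero polynomial in $k[t]$ of degree at most $d$. *)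

From HB Require Import structures.
From mathcomp Require Import all_boot all_order all_algebra.
Set Implicit Arguments. Unset Strict Implicit. Unset Printing Implicit Defensive.
Import Order.TTheory GRing.Theory.
Local Open Scope ring_scope.

Section Defs.
Variables (k : fieldType) (A : algType k) (m : nat).

(* p_{i_1..i_m}(a_1..a_m): sum over all words w in the alphabet 'I_m of length
   i_1+...+i_m with exactly i_j occurrences of letter j, of a_{w_1}...a_{w_n}.
   Distinct noncommutative monomials <-> distinct such words. *)
Definition pev (a : 'I_m -> A) (i : 'I_m -> nat) : A :=
  \sum_(w : (\sum_(j < m) i j)%N.-tuple 'I_m | [forall j, count_mem j w == i j])
     \prod_(x <- w) a x.

(* x \in P_n(a) : x is a k-linear combination of the p_i(a) with |i| = n
   (every such i has all entries <= n, hence is an element of {ffun 'I_m -> 'I_n.+1}). *)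
Definition inP (a : 'I_m -> A) (n : nat) (x : A) : Prop :=
  exists c : {ffun 'I_m -> 'I_n.+1} -> k,
    x = \sum_(i : {ffun 'I_m -> 'I_n.+1} | (\sum_(j < m) (i j : nat) == n)%N)
          c i *: pev a (fun j => i j).

Definition inPle (a : 'I_m -> A) (r : nat) (x : A) : Prop :=
  exists xs : 'I_r.+1 -> A, (forall n : 'I_r.+1, inP a n (xs n)) /\
    x = \sum_(n < r.+1) xs n.

End Defs.

Definition algebraic_le (k : fieldType) (A : algType k) (d : nat) (u : A) : Prop :=
  exists q : {poly k}, q != 0 /\ (size q <= d.+1)%N /\ horner_alg u q = 0.

From HB Require Import structures.
From mathcomp Require Import all_boot all_order all_algebra.
Import GRing.Theory.
Local Open Scope ring_scope.

(* Expanding [u = \sum_j alpha_j a_j] gives [u ^+ n = \sum_(|i| = n) alpha^i p_i(a)].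
   As u is annihilated by a polynomial of degree at most d, every power of u is a
   combination of [u ^+ t], t < d, each lying in P_t; hence all powers of u lie in
   P_{<= d-1}.  With D+1 distinct scalars s_0..s_D, inverting the Vandermonde
   matrix of the s_t in each of the m coordinates writes every p_i(a) with |i| = D
   as a combination of the powers [(\sum_j s_(f j) a_j) ^+ D]. *)

Lemma prodr_count_mem (R : comPzSemiRingType) (I : finType) (F : I -> R) (w : seq I) :
  \prod_(x <- w) F x = \prod_(j : I) F j ^+ count_mem j w.
Proof.
elim: w => [|x w IHw]; first by rewrite big_nil big1 // => j _; rewrite expr0.
rewrite big_cons IHw /=; under [RHS]eq_bigr do rewrite exprD.
rewrite big_split /=; congr (_ * _).
rewrite (bigD1 x) //= eqxx expr1 big1 ?mulr1 // => j.
by rewrite eq_sym => /negbTE ->; rewrite expr0.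
Qed.

Lemma sum_count_mem (I : finType) (w : seq I) :
  (\sum_(j : I) count_mem j w)%N = size w.
Proof.
elim: w => [|x w IHw]; first by rewrite big1.
rewrite /= big_split /= IHw (bigD1 x) //= eqxx big1 // => j.
by rewrite eq_sym => /negbTE ->.
Qed.

Lemma exprn_sum_tuple (R : pzSemiRingType) (I : finType) (b : I -> R) n :
  (\sum_(j : I) b j) ^+ n = \sum_(w : n.-tuple I) \prod_(x <- w) b x.
Proof.
elim: n => [|n IHn].
  rewrite expr0 (eq_bigr (fun _ => 1)) ?sumr_const ?card_tuple //.
  by move=> w _; rewrite (tuple0 w) big_nil.
rewrite exprS IHn mulr_suml.
rewrite (reindex (fun p : I * n.-tuple I => [tuple of p.1 :: p.2])) /=; last first.
  apply: onW_bij; exists (fun t : n.+1.-tuple I => (thead t, [tuple of behead t])).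
    by move=> [x w]; rewrite /= theadE; congr (_, _); apply: val_inj.
  by move=> t; rewrite -tuple_eta.
rewrite -(pair_big xpredT xpredT (fun j (w : n.-tuple I) => \prod_(x <- j :: w) b x)).
by apply: eq_bigr => j _; rewrite mulr_sumr; apply: eq_bigr => w _; rewrite big_cons.
Qed.

Section PowerSums.
Variables (k : fieldType) (A : algType k) (m : nat) (a : 'I_m -> A).

(* Counts of letters in a word of length n are at most n, hence fit the index type of [inP]. *)
Definition multideg {n} (w : n.-tuple 'I_m) : {ffun 'I_m -> 'I_n.+1} :=
  [ffun j => inord (count_mem j w)].

Lemma multidegE n (w : n.-tuple 'I_m) j : (multideg w j : nat) = count_mem j w.
Proof.
by rewrite ffunE inordK // ltnS -{2}(size_tuple w) count_size.
Qed.

Lemma multideg_eq n (w : n.-tuple 'I_m) (i : {ffun 'I_m -> 'I_n.+1}) :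
  (multideg w == i) = [forall j, count_mem j w == i j].
Proof.
apply/eqP/forallP => [<- j|eq_wi]; first by rewrite multidegE.
by apply/ffunP => j; apply: val_inj; rewrite /= multidegE; apply/eqP.
Qed.

Lemma expr_lincomb_pev (alpha : 'I_m -> k) n :
  (\sum_(j < m) alpha j *: a j) ^+ n =
  \sum_(i : {ffun 'I_m -> 'I_n.+1} | (\sum_(j < m) (i j : nat) == n)%N)
     (\prod_(j < m) alpha j ^+ i j) *: pev a (fun j => i j).
Proof.
rewrite exprn_sum_tuple; under eq_bigr do rewrite scaler_prod.
rewrite (partition_big (@multideg n) (fun i => \sum_(j < m) (i j : nat) == n)%N)
  /=; last first.
  by move=> w _; under eq_bigr do rewrite multidegE; rewrite sum_count_mem size_tuple.
apply: eq_bigr => i /eqP sum_i; rewrite /pev sum_i scaler_sumr.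
apply: eq_big => w; first by rewrite multideg_eq.
rewrite multideg_eq => /forallP count_w; rewrite prodr_count_mem.
by congr (_ *: _); apply: eq_bigr => j _; rewrite (eqP (count_w j)).
Qed.

Lemma inP0 n : inP a n 0.
Proof. by exists (fun _ => 0); rewrite big1 // => i _; rewrite scale0r. Qed.

Lemma inPD n x y : inP a n x -> inP a n y -> inP a n (x + y).
Proof.
move=> [c ->] [c' ->]; exists (fun i => c i + c' i).
by rewrite -big_split; apply: eq_bigr => i _; rewrite scalerDl.
Qed.

Lemma inPZ n (l : k) x : inP a n x -> inP a n (l *: x).
Proof.
move=> [c ->]; exists (fun i => l * c i).
by rewrite scaler_sumr; apply: eq_bigr => i _; rewrite scalerA.
Qed.

Lemma inP_expr_lincomb (alpha : 'I_m -> k) n :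
  inP a n ((\sum_(j < m) alpha j *: a j) ^+ n).
Proof. by rewrite expr_lincomb_pev; eexists. Qed.

Section Filtration.
Variable r : nat.

Lemma inPle0 : inPle a r 0.
Proof. by exists (fun _ => 0); split; [move=> n; apply: inP0 | rewrite big1]. Qed.

Lemma inPleD x y : inPle a r x -> inPle a r y -> inPle a r (x + y).
Proof.
move=> [xs [xsP ->]] [ys [ysP ->]]; exists (fun n => xs n + ys n).
by split; [move=> n; apply: inPD | rewrite big_split].
Qed.

Lemma inPleZ (l : k) x : inPle a r x -> inPle a r (l *: x).
Proof.
move=> [xs [xsP ->]]; exists (fun n => l *: xs n).
by split; [move=> n; apply: inPZ | rewrite scaler_sumr].
Qed.

Lemma inPle_sum (I : finType) (P : pred I) (F : I -> A) :
  (forall i, P i -> inPle a r (F i)) -> inPle a r (\sum_(i | P i) F i).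
Proof. by apply: big_ind; [exact: inPle0 | exact: inPleD]. Qed.

Lemma inP_inPle t x : (t <= r)%N -> inP a t x -> inPle a r x.
Proof.
move=> le_tr xP; exists (fun n : 'I_r.+1 => if n == inord t then x else 0).
split; first by move=> n; case: eqP => [->|_]; [rewrite inordK | exact: inP0].
by rewrite (bigD1 (inord t)) //= eqxx big1 ?addr0 // => n /negbTE ->.
Qed.

End Filtration.

Lemma algebraic_expr_inPle d (alpha : 'I_m -> k) n : (1 <= d)%N ->
  algebraic_le d (\sum_(j < m) alpha j *: a j) ->
  inPle a d.-1 ((\sum_(j < m) alpha j *: a j) ^+ n).
Proof.
set u := \sum_(j < m) _; move=> d_gt0 [q [q_neq0 [size_q qu]]].
have low_pow t : (t < d)%N -> inPle a d.-1 (u ^+ t).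
  move=> lt_td; apply: (@inP_inPle _ t); last exact: inP_expr_lincomb.
  by rewrite -ltnS prednK.
have -> : u ^+ n = horner_alg u ('X ^+ n %% q).
  have := congr1 (horner_alg u) (divp_eq ('X ^+ n) q).
  by rewrite rmorphD rmorphM /= qu mulr0 add0r rmorphXn /= horner_algX.
have size_rem : (size ('X ^+ n %% q)%R <= d)%N.
  by rewrite -ltnS (leq_trans _ size_q) // ltn_modp.
rewrite -[_ %% q]coefK poly_def linear_sum /=.
apply: inPle_sum => t _; rewrite linearZ /= mulr_algl rmorphXn /= horner_algX.
exact/inPleZ/low_pow/(leq_trans (ltn_ord t)).
Qed.

End PowerSums.

Lemma vandermonde_dual_weights {k : fieldType} {D : nat} {s : seq k} :
  uniq s -> size s = D.+1 ->
  exists lam : 'I_D.+1 -> 'I_D.+1 -> k,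
    forall e i : 'I_D.+1, \sum_(t < D.+1) lam e t * s`_t ^+ i = (i == e)%:R.
Proof.
move=> s_uniq s_size; set V := Vandermonde D.+1 (\row_(t < D.+1) s`_t).
have V_unit : V \in unitmx.
  rewrite unitmxE unitfE det_Vandermonde.
  apply/prodf_neq0 => i _; apply/prodf_neq0 => j lt_ij; rewrite !mxE subr_eq0.
  apply: contraTneq lt_ij => /eqP; rewrite nth_uniq ?s_size // => /eqP/val_inj ->.
  by rewrite ltnn.
exists (fun e t => invmx V t e) => e i.
have /matrixP/(_ i e) := mulmxV V_unit; rewrite !mxE => <-.
by apply: eq_bigr => t _; rewrite mulrC !mxE.
Qed.

(* Tensoring the one-variable dual weights over the coordinates of J. *)
Lemma prod_dual_weights {k : fieldType} {D : nat} {J : finType}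
    {lam : 'I_D.+1 -> 'I_D.+1 -> k} {s : seq k} :
  (forall e i : 'I_D.+1, \sum_(t < D.+1) lam e t * s`_t ^+ i = (i == e)%:R) ->
  forall e i : {ffun J -> 'I_D.+1},
    \sum_(f : {ffun J -> 'I_D.+1})
       (\prod_(j : J) lam (e j) (f j)) * \prod_(j : J) s`_(f j) ^+ i j
    = (i == e)%:R.
Proof.
move=> lamP e i; under eq_bigr do rewrite -big_split /=.
rewrite -(bigA_distr_bigA (fun j t => lam (e j) t * s`_t ^+ i j)) /=.
under eq_bigr do rewrite lamP.
have [->|neq_ie] := eqVneq i e; first by rewrite big1 // => j _; rewrite eqxx.
have [j neq_j] : exists j, i j != e j.
  apply/existsP; rewrite -negb_forall; apply: contra neq_ie => /forallP ie.
  by apply/eqP/ffunP => j; apply/eqP.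
by rewrite (bigD1 j) //= (negbTE neq_j) mul0r.
Qed.

Lemma pev_as_powers {k : fieldType} {A : algType k} {m D : nat} (a : 'I_m -> A)
    {s : seq k} {lam : 'I_D.+1 -> 'I_D.+1 -> k} {e : {ffun 'I_m -> 'I_D.+1}} :
  (forall e i : 'I_D.+1, \sum_(t < D.+1) lam e t * s`_t ^+ i = (i == e)%:R) ->
  (\sum_(j < m) (e j : nat) == D)%N ->
  pev a (fun j => e j) =
    \sum_(f : {ffun 'I_m -> 'I_D.+1})
      (\prod_(j < m) lam (e j) (f j)) *: (\sum_(j < m) s`_(f j) *: a j) ^+ D.
Proof.
move=> lamP deg_e; under eq_bigr do rewrite expr_lincomb_pev scaler_sumr.
rewrite exchange_big /= (bigD1 e deg_e) /=; under eq_bigr do rewrite scalerA.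
rewrite -scaler_suml prod_dual_weights // eqxx scale1r big1 ?addr0 // => i /andP [_ neq_ie].
under eq_bigr do rewrite scalerA.
by rewrite -scaler_suml prod_dual_weights // (negbTE neq_ie) scale0r.
Qed.

Theorem lemma3p2 (d D : nat) (k : fieldType) (A : algType k) (m : nat)
  (a : 'I_m -> A) :
  (1 <= d)%N -> (d <= D)%N ->
  (exists s : seq k, uniq s /\ size s = D.+1) ->
  (forall alpha : 'I_m -> k, algebraic_le d (\sum_(j < m) alpha j *: a j)) ->
  forall x : A, inP a D x -> inPle a d.-1 x.
Proof.
move=> d_gt0 _ [s [s_uniq s_size]] alg_a x [c ->].
have [lam lamP] := vandermonde_dual_weights s_uniq s_size.
apply: inPle_sum => e deg_e; apply: inPleZ.
rewrite (pev_as_powers _ lamP deg_e).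
by apply: inPle_sum => f _; apply/inPleZ/algebraic_expr_inPle.
Qed.
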